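(* Let $I$ be a nonempty open real interval and let $(f,g)\in\mathscr{B}_0(I)$. For $n\in\mathbb{N}$, $x=(x_1,\dots,x_n)\in I^n$ and $\lambda=(\lambda_1,\dots,\lambda_n)\in\Lambda_n$ write \[ B_{g,f}(x,\lambda):=\Big(\frac{g}{f}\Big)^{-1}\!\left(\frac{\sum_{i=1}^n\lambda_ig(x_i)}{\sum_{i=1}^n\lambda_if(x_i)}\right),\qquad A_h(x,\lambda):=h^{-1}\!\left(\frac{\sum_{i=1}^n\lambda_ih(x_i)}{\sum_{i=1}^n\lambda_i}\right), \] and $B_{g,f}(x)$, $A_h(x)$ for the case $\lambda_1=\dots=\lambda_n=1$. Consider the statements: (i) There exists a continuous strictly monotone $h:I\to\mathbb{R}$ such that $B_{g,f}(x,\lambda)=A_h(x,\lambda)$ for all $n\in\mathbb{N}$, $x\in I^n$, $\lambda\in\Lambda_n$. (ii) There exists a continuous strictly monotone $h:I\to\mathbb{R}$ such that $B_{g,f}(x)=A_h(x)$ for all $n\in\mathbb{N}$ and $x\in I^n$. (iii) There exist a continuous strictly monotone $h:I\to\mathbb{R}$ and $n\geq3$ such that $B_{g,f}(x)=A_h(x)$ for all $x\in I^n$. (iv) There exists a continuous strictly monotone $h:I\to\mathbb{R}$ such that $B_{g,f}(x,\lambda)=A_h(x,\lambda)$ for all $x\in I^2$ and $\lambda\in\Lambda_2$. (v) There exist $t\in\,]0,\frac12[\,\cup\,]\frac12,1[\,$ and a continuous strictly monotone $h:I\to\mathbb{R}$ such that $B_{g,f}(x,\lambda)=A_h(x,\lambda)$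 for all $x\in I^2$ with $\lambda=(t,1-t)$. (vi) There exist constants $a,b\in\mathbb{R}$ such that $af+bg=1$ on $I$. (vii) (Applicable when $(f,g)\in\mathscr{B}_2(I)$.) $\Psi_{f,g}=0$ on $I$. Then (i)–(vi) are equivalent, and if in addition $(f,g)\in\mathscr{B}_2(I)$, then (i)–(vii) are all equivalent.
   Context: $\Lambda_n:=\{(\lambda_1,\dots,\lambda_n)\in\mathbb{R}^n:\lambda_1,\dots,\lambda_n\geq0,\ \lambda_1+\dots+\lambda_n>0\}$. $\mathscr{B}_0(I)$ is the class of pairs $(f,g)$ of functions $I\to\mathbb{R}$ such that $f$ is everywhere positive on $I$ and $g/f$ is strictly monotone and continuous on $I$. $\mathscr{B}_2(I)$ is the class of pairs $(f,g)$ such that $f$ is everywhere positive on $I$, $f,g$ are twice continuously differentiable on $I$, and $(g/f)'$ is nowhere zero on $I$. For such pairs, $W^{i,j}_{f,g}:=f^{(i)}g^{(j)}-f^{(j)}g^{(i)}$ and $\Psi_{f,g}:=-W^{2,1}_{f,g}/W^{1,0}_{f,g}$. *)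

From Stdlib Require Import Reals ClassicalEpsilon.
From Coquelicot Require Import Coquelicot.
Open Scope R_scope.

Definition Ival (a b : Rbar) : R -> Prop := fun x => Rbar_lt a x /\ Rbar_lt x b.

Fixpoint sumR (n : nat) (u : nat -> R) : R :=
  match n with O => 0 | S k => sumR k u + u k end.

Definition strictly_monotone_on (I : R -> Prop) (h : R -> R) : Prop :=
  (forall x y, I x -> I y -> x < y -> h x < h y) \/
  (forall x y, I x -> I y -> x < y -> h y < h x).

Definition continuous_on_I (I : R -> Prop) (h : R -> R) : Prop :=
  forall x, I x -> continuous h x.

(* inverse of phi restricted to I: some z in I with phi z = y (unique when
   phi is strictly monotone on I and y is in the image of I). *)
Definition inv_on (I : R -> Prop) (phi : R -> R) (y : R) : R :=
  epsilon (inhabits 0) (fun z => I z /\ phi z = y).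

Definition in_In (I : R -> Prop) (n : nat) (x : nat -> R) : Prop :=
  forall i, (i < n)%nat -> I (x i).

Definition in_Lambda (n : nat) (l : nat -> R) : Prop :=
  (forall i, (i < n)%nat -> 0 <= l i) /\ 0 < sumR n l.

Definition ones : nat -> R := fun _ => 1.

Definition B0 (I : R -> Prop) (f g : R -> R) : Prop :=
  (forall x, I x -> 0 < f x) /\
  strictly_monotone_on I (fun y => g y / f y) /\
  continuous_on_I I (fun y => g y / f y).

Definition C2_on (I : R -> Prop) (f : R -> R) : Prop :=
  forall x, I x -> ex_derive f x /\ ex_derive (Derive f) x /\
                   continuous (Derive (Derive f)) x.

Definition B2 (I : R -> Prop) (f g : R -> R) : Prop :=
  (forall x, I x -> 0 < f x) /\ C2_on I f /\ C2_on I g /\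
  (forall x, I x -> Derive (fun y => g y / f y) x <> 0).

Definition Wr (f g : R -> R) (i j : nat) (x : R) : R :=
  Derive_n f i x * Derive_n g j x - Derive_n f j x * Derive_n g i x.

Definition Psi (f g : R -> R) (x : R) : R := - Wr f g 2 1 x / Wr f g 1 0 x.

Definition Bmean (I : R -> Prop) (f g : R -> R) (n : nat) (x l : nat -> R) : R :=
  inv_on I (fun y => g y / f y)
    (sumR n (fun i => l i * g (x i)) / sumR n (fun i => l i * f (x i))).

Definition Amean (I : R -> Prop) (h : R -> R) (n : nat) (x l : nat -> R) : R :=
  inv_on I h (sumR n (fun i => l i * h (x i)) / sumR n l).

Definition qa_gen (I : R -> Prop) (h : R -> R) : Prop :=
  continuous_on_I I h /\ strictly_monotone_on I h.

Definition two_weights (t : R) : nat -> R := fun i => match i with O => t | _ => 1 - t end.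

(* If c f + d g = 1 on I, then (f, g) spans the same plane of functions as
   (1, c g - d f), and a Bajraktarevic mean only depends on that plane, so
   B_{g,f} = A_h for a Moebius transform h of g/f and all weights.

   Conversely, let B_{g,f} = A_h for the weights (t, 1-t), t <> 1/2.  In the
   coordinate u = h x the vector P(u) = (f, g)(h^-1 u) satisfies
   P(t u + (1-t) v) = k(u, v) (t P(u) + (1-t) P(v)) with k > 0.  The point
   t (t u + (1-t) v) + (1-t) u = t u + (1-t) (t v + (1-t) u) is such a
   combination in two ways, which forces k = 1.  So P solves Jensen's equation
   with weight t; being locally bounded below (f > 0 and g/f is monotone) it is
   affine, and two independent values of an affine P give c, d with
   c f + d g = 1.  Unweighted means of n >= 3 points contain the weights
   (1/n, 1 - 1/n) by repeating a point.

   For (f, g) in B_2, c f + d g = 1 means (c, d) <> 0 annihilates both (f', g')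
   and (f'', g''), i.e. W^{2,1} = 0; conversely, when W^{2,1} = 0 the
   coefficients (-g', f') / W^{1,0} are constant. *)

From Stdlib Require Import Reals Lra Lia Classical ClassicalEpsilon.
From Coquelicot Require Import Coquelicot.
Open Scope R_scope.

(** * Intervals and inverses of monotone functions *)

Definition convex_set (I : R -> Prop) : Prop :=
  forall x y z, I x -> I y -> x <= z <= y -> I z.

Lemma convex_set_comb I u v t :
  convex_set I -> I u -> I v -> 0 <= t <= 1 -> I (t * u + (1 - t) * v).
Proof.
  intros HI Hu Hv Ht.
  destruct (Rle_dec u v).
  - apply (HI u v); auto; split; nra.
  - apply (HI v u); auto; split; nra.
Qed.

Lemma Ival_convex a b : convex_set (Ival a b).
Proof.
  intros x y z [Hax Hxb] [Hay Hyb] Hz; split.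
  - destruct a as [r| |]; simpl in *; auto; lra.
  - destruct b as [r| |]; simpl in *; auto; lra.
Qed.

Lemma Ival_ex_lt a b x : Ival a b x -> exists y, Ival a b y /\ y < x.
Proof.
  intros [Hax Hxb].
  destruct a as [r| |]; simpl in *; try contradiction.
  - exists ((r + x) / 2); repeat split; simpl; try lra.
    destruct b as [r'| |]; simpl in *; auto; lra.
  - exists (x - 1); repeat split; simpl; auto; try lra.
    destruct b as [r'| |]; simpl in *; auto; lra.
Qed.

Lemma Ival_ex_gt a b x : Ival a b x -> exists y, Ival a b y /\ x < y.
Proof.
  intros [Hax Hxb].
  destruct b as [r| |]; simpl in *; try contradiction.
  - exists ((r + x) / 2); repeat split; simpl; try lra.
    destruct a as [r'| |]; simpl in *; auto; lra.
  - exists (x + 1); repeat split; simpl; auto; try lra.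
    destruct a as [r'| |]; simpl in *; auto; lra.
Qed.

Lemma Ival_nonempty a b : Rbar_lt a b -> exists x, Ival a b x.
Proof.
  intros Hab; unfold Ival.
  destruct a as [r| |], b as [r'| |]; simpl in *; try contradiction.
  - exists ((r + r') / 2); simpl; lra.
  - exists (r + 1); simpl; split; auto; lra.
  - exists (r' - 1); simpl; split; auto; lra.
  - exists 0; simpl; auto.
Qed.

Lemma Ival_locally a b x : Ival a b x -> locally x (Ival a b).
Proof.
  exact (open_and _ _ (open_Rbar_gt a) (open_Rbar_lt b) x).
Qed.

Lemma IVT_convex I h x y w :
  convex_set I -> continuous_on_I I h -> I x -> I y -> h x <= w <= h y ->
  exists z, I z /\ h z = w.
Proof.
  intros HI Hh Hx Hy Hw.
  destruct (Req_dec (h x) w) as [E|E]; [now exists x|].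
  destruct (Req_dec (h y) w) as [E'|E']; [now exists y|].
  assert (cont : forall c u v, I u -> I v -> u <= c <= v -> continuity_pt h c).
  { intros c u v Hu Hv Hc. apply continuity_pt_filterlim, Hh, (HI u v); auto. }
  destruct (Rtotal_order x y) as [Hxy|[Hxy|Hxy]].
  - assert (Hc : forall c, x <= c <= y -> continuity_pt (fun z => h z - w) c).
    { intros c Hc. apply continuity_pt_minus; [apply (cont c x y); auto|].
      apply continuity_pt_const; now intros ? ?. }
    destruct (Ranalysis5.IVT_interv _ x y Hc Hxy ltac:(lra) ltac:(lra)) as [z [Hz Ez]].
    exists z; split; [apply (HI x y); auto|lra].
  - subst; lra.
  - assert (Hc : forall c, y <= c <= x -> continuity_pt (fun z => w - h z) c).
    { intros c Hc. apply continuity_pt_minus; [|apply (cont c y x); auto].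
      apply continuity_pt_const; now intros ? ?. }
    destruct (Ranalysis5.IVT_interv _ y x Hc Hxy ltac:(lra) ltac:(lra)) as [z [Hz Ez]].
    exists z; split; [apply (HI y x); auto|lra].
Qed.

Lemma strictly_monotone_inj I h x y :
  strictly_monotone_on I h -> I x -> I y -> h x = h y -> x = y.
Proof.
  intros [H|H] Hx Hy E; destruct (Rtotal_order x y) as [L|[L|L]]; auto;
  [specialize (H x y Hx Hy L)|specialize (H y x Hy Hx L)
  |specialize (H x y Hx Hy L)|specialize (H y x Hy Hx L)]; lra.
Qed.

Lemma strictly_monotone_between I h x y z :
  strictly_monotone_on I h -> I x -> I y -> I z -> x <= z <= y ->
  Rmin (h x) (h y) <= h z <= Rmax (h x) (h y).
Proof.
  intros Hh Hx Hy Hz [Hxz Hzy].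
  destruct (Req_dec x z) as [<-|Nxz]; [split; [apply Rmin_l|apply Rmax_l]|].
  destruct (Req_dec z y) as [->|Nzy]; [split; [apply Rmin_r|apply Rmax_r]|].
  destruct Hh as [H|H];
  pose proof (H x z Hx Hz ltac:(lra)); pose proof (H z y Hz Hy ltac:(lra));
  unfold Rmin, Rmax; repeat destruct Rle_dec; lra.
Qed.

Definition image (I : R -> Prop) (h : R -> R) (u : R) : Prop := exists x, I x /\ h x = u.

Lemma inv_on_spec I phi y :
  image I phi y -> I (inv_on I phi y) /\ phi (inv_on I phi y) = y.
Proof. exact (epsilon_spec (inhabits 0) (fun z => I z /\ phi z = y)). Qed.

Lemma inv_on_eq I phi y z :
  strictly_monotone_on I phi -> I z -> phi z = y -> inv_on I phi y = z.
Proof.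
  intros Hm Hz E.
  destruct (inv_on_spec I phi y) as [H1 H2]; [now exists z|].
  apply (strictly_monotone_inj I phi); auto; congruence.
Qed.

Lemma image_convex I h : convex_set I -> continuous_on_I I h -> convex_set (image I h).
Proof.
  intros HI Hh u v w [x [Hx <-]] [y [Hy <-]] Hw.
  destruct (IVT_convex I h x y w HI Hh Hx Hy Hw) as [z [Hz Ez]].
  now exists z.
Qed.

Lemma image_Ival_ex_lt a b h :
  strictly_monotone_on (Ival a b) h ->
  forall u, image (Ival a b) h u -> exists v, image (Ival a b) h v /\ v < u.
Proof.
  intros [Hm|Hm] u [x [Hx <-]].
  - destruct (Ival_ex_lt a b x Hx) as [y [Hy Hyx]]. exists (h y); split; [now exists y|auto].
  - destruct (Ival_ex_gt a b x Hx) as [y [Hy Hxy]]. exists (h y); split; [now exists y|auto].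
Qed.

Lemma strictly_monotone_inv_on I h :
  strictly_monotone_on I h -> strictly_monotone_on (image I h) (inv_on I h).
Proof.
  intros [Hm|Hm]; [left|right]; intros u v Hu Hv Huv;
    destruct (inv_on_spec I h u Hu) as [Iu Eu], (inv_on_spec I h v Hv) as [Iv Ev];
    destruct (Rtotal_order (inv_on I h u) (inv_on I h v)) as [L|[L|L]]; auto;
    try (rewrite L, Ev in Eu; lra);
    [specialize (Hm _ _ Iv Iu L)|specialize (Hm _ _ Iu Iv L)]; lra.
Qed.

Lemma strictly_monotone_comp J I F G :
  (forall u, J u -> I (F u)) -> strictly_monotone_on J F -> strictly_monotone_on I G ->
  strictly_monotone_on J (fun u => G (F u)).
Proof.
  intros HF [Fm|Fm] [Gm|Gm]; [left|right|right|left]; intros x y Hx Hy Hxy;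
    specialize (Fm x y Hx Hy Hxy); apply Gm; auto.
Qed.

(** * Weighted sums and means *)

Lemma sumR_ext n u v : (forall i, (i < n)%nat -> u i = v i) -> sumR n u = sumR n v.
Proof.
  induction n as [|n IH]; intros H; simpl; auto.
  rewrite IH by (intros; apply H; lia). rewrite H by lia. reflexivity.
Qed.

Lemma sumR_lincomb n c d u v :
  sumR n (fun i => c * u i + d * v i) = c * sumR n u + d * sumR n v.
Proof. induction n as [|n IH]; simpl; [ring|rewrite IH; ring]. Qed.

Lemma sumR_nonneg n u : (forall i, (i < n)%nat -> 0 <= u i) -> 0 <= sumR n u.
Proof.
  induction n as [|n IH]; intros H; simpl; [lra|].
  pose proof (H n ltac:(lia)). assert (0 <= sumR n u) by (apply IH; intros; apply H; lia).
  lra.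
Qed.

Lemma sumR_weighted_pos n l w : in_Lambda n l -> (forall i, (i < n)%nat -> 0 < w i) ->
  0 < sumR n (fun i => l i * w i).
Proof.
  induction n as [|n IH]; intros [Hl Hs] Hw; simpl in *; [lra|].
  pose proof (Hl n ltac:(lia)). pose proof (Hw n ltac:(lia)).
  assert (Hl' : forall i, (i < n)%nat -> 0 <= l i) by (intros; apply Hl; lia).
  assert (0 <= sumR n (fun i => l i * w i)).
  { apply sumR_nonneg. intros i Hi. pose proof (Hl' i Hi). pose proof (Hw i ltac:(lia)). nra. }
  destruct (Rlt_dec 0 (sumR n l)) as [Hpos|Hpos].
  - assert (0 < sumR n (fun i => l i * w i)) by (apply IH; [split|]; auto; intros; apply Hw; lia).
    nra.
  - assert (0 <= sumR n l) by (apply sumR_nonneg; auto). nra.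
Qed.

Lemma weighted_avg_attained I u n x l :
  convex_set I -> continuous_on_I I u -> in_In I n x -> in_Lambda n l ->
  exists z, I z /\ u z = sumR n (fun i => l i * u (x i)) / sumR n l.
Proof.
  intros HI Hu Hx Hl. pose proof Hl as [_ Hs].
  set (avg := sumR n (fun i => l i * u (x i)) / sumR n l).
  assert (E : sumR n (fun i => l i * (u (x i) - avg)) = 0).
  { rewrite (sumR_ext n _ (fun i => 1 * (l i * u (x i)) + (- avg) * l i)) by (intros; ring).
    rewrite sumR_lincomb. unfold avg. field. lra. }
  assert (Hlow : exists i, (i < n)%nat /\ u (x i) <= avg).
  { apply NNPP; intros C.
    enough (0 < sumR n (fun i => l i * (u (x i) - avg))) by lra.
    apply sumR_weighted_pos; auto. intros i Hi.
    destruct (Rle_dec (u (x i)) avg); [exfalso; apply C; eauto|lra]. }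
  assert (Hhigh : exists j, (j < n)%nat /\ avg <= u (x j)).
  { apply NNPP; intros C.
    enough (0 < sumR n (fun i => l i * (avg - u (x i)))) as Hpos.
    { rewrite (sumR_ext n _ (fun i => (-1) * (l i * (u (x i) - avg)) + 0 * l i)),
        sumR_lincomb, E in Hpos by (intros; ring).
      lra. }
    apply sumR_weighted_pos; auto. intros i Hi.
    destruct (Rle_dec avg (u (x i))); [exfalso; apply C; eauto|lra]. }
  destruct Hlow as [i [Hi Hui]], Hhigh as [j [Hj Huj]].
  apply (IVT_convex I u (x i) (x j)); auto.
Qed.

Lemma sumR_ones n : sumR n ones = INR n.
Proof.
  induction n as [|n IH]; [reflexivity|].
  simpl sumR. rewrite IH, S_INR. reflexivity.
Qed.

Lemma ones_Lambda n : (1 <= n)%nat -> in_Lambda n ones.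
Proof.
  intros Hn; split; [intros; unfold ones; lra|].
  rewrite sumR_ones. apply lt_0_INR; lia.
Qed.

Lemma Bmean_spec I f g n x l :
  convex_set I -> B0 I f g -> in_In I n x -> in_Lambda n l ->
  I (Bmean I f g n x l) /\
  g (Bmean I f g n x l) / f (Bmean I f g n x l) =
    sumR n (fun i => l i * g (x i)) / sumR n (fun i => l i * f (x i)).
Proof.
  intros HI [Hf [_ Hc]] Hx Hl. apply inv_on_spec.
  assert (Hlf : in_Lambda n (fun i => l i * f (x i))).
  { pose proof Hl as [Hl0 _]. split.
    - intros i Hi. pose proof (Hl0 i Hi). pose proof (Hf _ (Hx i Hi)). nra.
    - apply sumR_weighted_pos; auto. }
  destruct (weighted_avg_attained I _ n x _ HI Hc Hx Hlf) as [z [Hz Ez]].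
  exists z; split; auto. rewrite Ez. f_equal. apply sumR_ext.
  intros i Hi. pose proof (Hf _ (Hx i Hi)). field. lra.
Qed.

Lemma Amean_eq I h n x l z :
  qa_gen I h -> I z -> h z = sumR n (fun i => l i * h (x i)) / sumR n l ->
  Amean I h n x l = z.
Proof. intros [_ Hm] Hz E. now apply inv_on_eq. Qed.

Definition mobius (c d s : R) : R := (c * s - d) / (c + d * s).

Section OneInSpan.

Variables (I : R -> Prop) (f g : R -> R) (c d : R).
Hypothesis fg_B0 : B0 I f g.
Hypothesis one_in_span : forall x, I x -> c * f x + d * g x = 1.

Lemma mobius_denom_eq y : I y -> c + d * (g y / f y) = / f y.
Proof.
  intros Hy. destruct fg_B0 as [Hf _]. pose proof (Hf y Hy). pose proof (one_in_span y Hy).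
  field_simplify_eq; lra.
Qed.

Lemma mobius_denom_pos y : I y -> 0 < c + d * (g y / f y).
Proof.
  intros Hy. rewrite mobius_denom_eq by auto. destruct fg_B0 as [Hf _].
  now apply Rinv_0_lt_compat, Hf.
Qed.

Lemma mobius_ratio_eq y : I y -> mobius c d (g y / f y) = c * g y - d * f y.
Proof.
  intros Hy. destruct fg_B0 as [Hf _]. pose proof (Hf y Hy). pose proof (one_in_span y Hy).
  unfold mobius. rewrite mobius_denom_eq by auto. field. lra.
Qed.

Lemma span_coeffs_pos y : I y -> 0 < c * c + d * d.
Proof.
  intros Hy. pose proof (one_in_span y Hy).
  destruct (Req_dec c 0) as [->|Hc]; [|nra].
  destruct (Req_dec d 0) as [->|Hd]; [lra|nra].
Qed.

Lemma qa_gen_mobius : qa_gen I (fun y => mobius c d (g y / f y)).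
Proof.
  destruct fg_B0 as [Hf [Hm Hc]]. split.
  - intros x Hx. apply (continuous_comp (fun y => g y / f y) (mobius c d)); [now apply Hc|].
    pose proof (mobius_denom_pos x Hx).
    apply (ex_derive_continuous (mobius c d)). unfold mobius. auto_derive. lra.
  - assert (Hsub : forall x y, I x -> I y ->
      mobius c d (g y / f y) - mobius c d (g x / f x) =
      (c * c + d * d) / ((c + d * (g x / f x)) * (c + d * (g y / f y))) * (g y / f y - g x / f x)).
    { intros x y Hx Hy. pose proof (Hf x Hx). pose proof (Hf y Hy).
      pose proof (one_in_span x Hx). pose proof (one_in_span y Hy).
      unfold mobius. field. repeat split; lra. }
    assert (Hk : forall x y, I x -> I y ->
      0 < (c * c + d * d) / ((c + d * (g x / f x)) * (c + d * (g y / f y)))).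
    { intros x y Hx Hy. apply Rdiv_lt_0_compat; [now apply span_coeffs_pos with x|].
      apply Rmult_lt_0_compat; now apply mobius_denom_pos. }
    destruct Hm as [Hm|Hm]; [left|right]; intros x y Hx Hy Hxy;
      pose proof (Hsub x y Hx Hy) as E; pose proof (Hk x y Hx Hy); pose proof (Hm x y Hx Hy Hxy).
    + assert (0 < mobius c d (g y / f y) - mobius c d (g x / f x)); [|lra].
      rewrite E. apply Rmult_lt_0_compat; lra.
    + assert (mobius c d (g y / f y) - mobius c d (g x / f x) < 0); [|lra].
      rewrite E. apply Rmult_pos_neg; lra.
Qed.

Lemma Bmean_eq_Amean_mobius n x l :
  convex_set I -> in_In I n x -> in_Lambda n l ->
  Bmean I f g n x l = Amean I (fun y => mobius c d (g y / f y)) n x l.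
Proof.
  intros HI Hx Hl. pose proof fg_B0 as [Hf _].
  destruct (Bmean_spec I f g n x l HI fg_B0 Hx Hl) as [Hz Ez].
  symmetry. apply Amean_eq; [apply qa_gen_mobius|auto|].
  set (F := sumR n (fun i => l i * f (x i))). set (G := sumR n (fun i => l i * g (x i))).
  assert (HF : 0 < F) by (apply sumR_weighted_pos; auto; intros i Hi; apply Hf, Hx, Hi).
  assert (Enum : sumR n (fun i => l i * mobius c d (g (x i) / f (x i))) = c * G + (- d) * F).
  { unfold F, G. rewrite <- sumR_lincomb. apply sumR_ext. intros i Hi.
    rewrite mobius_ratio_eq by (apply Hx, Hi). ring. }
  assert (Eden : sumR n l = c * F + d * G).
  { unfold F, G. rewrite <- sumR_lincomb. apply sumR_ext. intros i Hi.
    rewrite <- (Rmult_1_r (l i)) at 1. rewrite <- (one_in_span (x i)) by (apply Hx, Hi). ring. }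
  assert (HL : 0 < c * F + d * G) by (rewrite <- Eden; apply Hl).
  rewrite Ez, Enum, Eden. fold F G. unfold mobius. field. lra.
Qed.

End OneInSpan.

Definition repeat_second (x : nat -> R) : nat -> R :=
  fun i => match i with O => x O | _ => x 1%nat end.

Lemma sumR_repeat_second k x u :
  sumR (S k) (fun i => ones i * u (repeat_second x i)) = u (x O) + INR k * u (x 1%nat).
Proof.
  induction k as [|k IH]; [simpl; unfold ones; ring|].
  change (sumR (S (S k)) ?v) with (sumR (S k) v + v (S k)).
  rewrite IH, S_INR. unfold ones; simpl. ring.
Qed.

Lemma two_weights_Lambda t : 0 < t < 1 -> in_Lambda 2 (two_weights t).
Proof.
  intros Ht; split; [intros [|[|i]] Hi; simpl; lra|simpl; lra].
Qed.

Lemma inv_INR_lt_half n : (3 <= n)%nat -> 0 < / INR n < 1 / 2.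
Proof.
  intros Hn. assert (3 <= INR n) by (replace 3 with (INR 3) by (simpl; ring); now apply le_INR).
  split; [apply Rinv_0_lt_compat; lra|].
  apply (Rmult_lt_reg_r (INR n)); [lra|]. rewrite Rinv_l; lra.
Qed.

(* Repeating the second point n-1 times turns the unweighted mean of n points
   into the mean of two points with weights 1/n and 1-1/n. *)
Lemma Bmean_eq_Amean_two_weights_of_ones I f g h n :
  (forall x, I x -> 0 < f x) -> (1 <= n)%nat ->
  (forall x, in_In I n x -> Bmean I f g n x ones = Amean I h n x ones) ->
  forall x, in_In I 2 x ->
  Bmean I f g 2 x (two_weights (/ INR n)) = Amean I h 2 x (two_weights (/ INR n)).
Proof.
  intros Hf Hn Hmeans x Hx. destruct n as [|k]; [lia|].
  assert (Hrep : in_In I (S k) (repeat_second x)) by (intros [|i] Hi; apply Hx; lia).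
  specialize (Hmeans _ Hrep). unfold Bmean, Amean in *.
  rewrite !sumR_repeat_second, sumR_ones, S_INR in Hmeans.
  pose proof (pos_INR k).
  pose proof (Hf _ (Hx O ltac:(lia))). pose proof (Hf _ (Hx 1%nat ltac:(lia))).
  rewrite S_INR. simpl sumR. unfold two_weights.
  match goal with |- inv_on _ _ ?A = inv_on _ _ ?B =>
    replace A with ((g (x O) + INR k * g (x 1%nat)) / (f (x O) + INR k * f (x 1%nat)));
    [replace B with ((h (x O) + INR k * h (x 1%nat)) / (INR k + 1))|] end.
  - exact Hmeans.
  - field. lra.
  - field. split; [lra|nra].
Qed.

(** * Jensen's equation with a fixed weight *)

Definition t_affine_on (S : R -> Prop) (t : R) (Q : R -> R) : Prop :=
  forall u v, S u -> S v -> Q (t * u + (1 - t) * v) = t * Q u + (1 - t) * Q v.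

Definition chord (Q : R -> R) (a b x : R) : R := (Q a * (b - x) + Q b * (x - a)) / (b - a).

Definition affine_on (S : R -> Prop) (Q : R -> R) : Prop :=
  forall a b x, S a -> S b -> a < b -> a <= x <= b -> Q x = chord Q a b x.

Lemma t_affine_on_sub S S' t Q :
  (forall x, S' x -> S x) -> t_affine_on S t Q -> t_affine_on S' t Q.
Proof. intros HS HQ u v Hu Hv. apply HQ; auto. Qed.

Lemma chord_between Q a b x :
  a < b -> a <= x <= b -> Rmin (Q a) (Q b) <= chord Q a b x <= Rmax (Q a) (Q b).
Proof.
  intros Hab Hx. unfold chord.
  pose proof (Rmin_l (Q a) (Q b)). pose proof (Rmin_r (Q a) (Q b)).
  pose proof (Rmax_l (Q a) (Q b)). pose proof (Rmax_r (Q a) (Q b)).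
  split; [apply Rle_div_r|apply Rle_div_l]; nra.
Qed.

Section FixedWeightJensen.

Variable t : R.
Hypothesis t_range : 0 < t < 1.

Lemma t_affine_zero_ends_step E a b x :
  t_affine_on (fun y => a <= y <= b) t E -> E a = 0 -> E b = 0 -> a <= x <= b ->
  exists z, a <= z <= b /\ (E x = t * E z \/ E x = (1 - t) * E z).
Proof.
  intros HE Ea Eb Hx.
  destruct (Rle_dec x (t * a + (1 - t) * b)).
  - set (z := (x - t * a) / (1 - t)).
    assert (Hz : a <= z <= b) by (unfold z; split; [apply Rle_div_r|apply Rle_div_l]; lra).
    exists z; split; auto; right.
    replace x with (t * a + (1 - t) * z) at 1 by (unfold z; field; lra).
    rewrite HE, Ea by (auto; lra). ring.
  - set (z := (x - (1 - t) * b) / t).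
    assert (Hz : a <= z <= b) by (unfold z; split; [apply Rle_div_r|apply Rle_div_l]; lra).
    exists z; split; auto; left.
    replace x with (t * z + (1 - t) * b) at 1 by (unfold z; field; lra).
    rewrite HE, Eb by (auto; lra). ring.
Qed.

(* A negative value would be magnified by at least 1 / max(t, 1-t) at each step. *)
Lemma t_affine_zero_ends_nonneg E a b :
  t_affine_on (fun y => a <= y <= b) t E -> E a = 0 -> E b = 0 ->
  (exists m, forall x, a <= x <= b -> m <= E x) ->
  forall x, a <= x <= b -> 0 <= E x.
Proof.
  intros HE Ea Eb [m Hm] x Hx. apply Rnot_lt_le; intros Hneg.
  set (M := Rmax t (1 - t)).
  assert (HM : 0 < M < 1).
  { unfold M. split; [apply Rlt_le_trans with t; [lra|apply Rmax_l]|apply Rmax_lub_lt; lra]. }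
  assert (Hiter : forall n, exists z, a <= z <= b /\ E z * M ^ n <= E x).
  { induction n as [|n [z [Hz Ez]]]; [exists x; simpl; split; auto; lra|].
    pose proof (pow_lt M n ltac:(lra)) as Hpow.
    assert (Ez_neg : E z < 0) by nra.
    destruct (t_affine_zero_ends_step E a b z HE Ea Eb Hz) as [z' [Hz' Ez']].
    exists z'; split; auto. simpl.
    assert (M * E z' <= E z).
    { assert (t <= M /\ 1 - t <= M) by (split; [apply Rmax_l|apply Rmax_r]).
      destruct Ez' as [Ez'|Ez']; rewrite Ez' in Ez_neg |- *; nra. }
    nra. }
  destruct (pow_lt_1_zero M ltac:(rewrite Rabs_pos_eq; lra) (- E x / (Rabs m + 1)))
    as [N HN].
  { apply Rdiv_lt_0_compat; [lra|pose proof (Rabs_pos m); lra]. }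
  specialize (HN N (le_n N)). rewrite Rabs_pos_eq in HN by (apply pow_le; lra).
  destruct (Hiter N) as [z [Hz Ez]]. pose proof (Hm z Hz).
  pose proof (pow_lt M N ltac:(lra)). pose proof (Rle_abs (- m)). rewrite Rabs_Ropp in *.
  apply Rlt_div_r in HN; [|pose proof (Rabs_pos m); lra].
  nra.
Qed.

Lemma t_affine_chord_le Q a b :
  a < b -> t_affine_on (fun y => a <= y <= b) t Q ->
  (exists m, forall x, a <= x <= b -> m <= Q x) ->
  forall x, a <= x <= b -> chord Q a b x <= Q x.
Proof.
  intros Hab HQ [m Hm] x Hx.
  enough (0 <= Q x - chord Q a b x) by lra.
  apply (t_affine_zero_ends_nonneg (fun y => Q y - chord Q a b y) a b); auto.
  - intros u v Hu Hv. rewrite HQ by auto. unfold chord. field. lra.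
  - unfold chord. field. lra.
  - unfold chord. field. lra.
  - exists (m - Rmax (Q a) (Q b)). intros y Hy.
    pose proof (Hm y Hy). pose proof (chord_between Q a b y Hab Hy). lra.
Qed.

Lemma t_affine_le_chord Q a b :
  a < b -> t_affine_on (fun y => a <= y <= b) t Q ->
  (exists M, forall x, a <= x <= b -> Q x <= M) ->
  forall x, a <= x <= b -> Q x <= chord Q a b x.
Proof.
  intros Hab HQ [M HM] x Hx.
  assert (E : chord (fun y => - Q y) a b x = - chord Q a b x) by (unfold chord; field; lra).
  enough (chord (fun y => - Q y) a b x <= - Q x) by lra.
  apply (t_affine_chord_le (fun y => - Q y) a b); auto.
  - intros u v Hu Hv. rewrite HQ by auto. ring.
  - exists (- M). intros y Hy. specialize (HM y Hy). lra.
Qed.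

(* The chord inequality on [c, z] at the point a bounds Q z from above. *)
Lemma t_affine_bounded_above Q c a b :
  c < a -> t_affine_on (fun y => c <= y <= b) t Q ->
  (exists m, forall x, c <= x <= b -> m <= Q x) ->
  exists M, forall x, a <= x <= b -> Q x <= M.
Proof.
  intros Hca HQ [m Hm].
  exists ((Rabs (Q a) + Rabs (Q c)) * (b - c) / (a - c)). intros z Hz.
  assert (Hchord : chord Q c z a <= Q a).
  { apply t_affine_chord_le; try lra.
    - apply (t_affine_on_sub (fun y => c <= y <= b)); auto. intros y Hy; lra.
    - exists m. intros y Hy. apply Hm. lra. }
  unfold chord in Hchord. apply Rle_div_l in Hchord; [|lra].
  apply Rle_div_r; [lra|].
  pose proof (Rle_abs (Q a)). pose proof (Rle_abs (- Q c)). rewrite Rabs_Ropp in *.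
  pose proof (Rabs_pos (Q a)). pose proof (Rabs_pos (Q c)).
  nra.
Qed.

Lemma affine_on_of_t_affine S Q :
  convex_set S -> (forall a, S a -> exists c, S c /\ c < a) -> t_affine_on S t Q ->
  (forall a b, S a -> S b -> a < b -> exists m, forall x, a <= x <= b -> m <= Q x) ->
  affine_on S Q.
Proof.
  intros HS Hlt HQ Hbdd a b x Ha Hb Hab Hx.
  destruct (Hlt a Ha) as [c [Hc Hca]].
  assert (Hsub : forall a' b', S a' -> S b' -> t_affine_on (fun y => a' <= y <= b') t Q).
  { intros a' b' Ha' Hb'. apply (t_affine_on_sub S); auto. intros y Hy. now apply (HS a' b'). }
  apply Rle_antisym.
  - apply t_affine_le_chord; auto.
    apply (t_affine_bounded_above Q c a b); [lra|auto|apply Hbdd; auto; lra].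
  - apply t_affine_chord_le; auto.
Qed.

End FixedWeightJensen.

Lemma affine_on_lincomb S c d p q :
  affine_on S p -> affine_on S q -> affine_on S (fun u => c * p u + d * q u).
Proof.
  intros Hp Hq a b x Ha Hb Hab Hx. rewrite (Hp a b x), (Hq a b x) by auto.
  unfold chord. field. lra.
Qed.

Lemma affine_on_const S r u0 u1 :
  affine_on S r -> S u0 -> S u1 -> u0 < u1 -> r u0 = r u1 ->
  forall u, S u -> r u = r u0.
Proof.
  intros Hr H0 H1 H01 E u Hu.
  set (a := Rmin u0 u). set (b := Rmax u1 u).
  assert (Ha : S a) by (unfold a, Rmin; destruct Rle_dec; auto).
  assert (Hb : S b) by (unfold b, Rmax; destruct Rle_dec; auto).
  assert (a <= u0 /\ a <= u) by (split; [apply Rmin_l|apply Rmin_r]).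
  assert (u1 <= b /\ u <= b) by (split; [apply Rmax_l|apply Rmax_r]).
  assert (Hab : a < b) by lra.
  assert (Ends : r b = r a).
  { assert (Z : (r b - r a) * (u1 - u0) = (chord r a b u1 - chord r a b u0) * (b - a))
      by (unfold chord; field; lra).
    rewrite <- (Hr a b u0), <- (Hr a b u1), E, Rminus_diag, Rmult_0_l in Z by (auto; lra).
    apply Rmult_integral in Z. lra. }
  rewrite (Hr a b u), (Hr a b u0) by (auto; lra). unfold chord. rewrite Ends. field. lra.
Qed.

Lemma one_in_span_of_affine_pair S p q u0 u1 :
  affine_on S p -> affine_on S q -> S u0 -> S u1 -> u0 < u1 ->
  p u0 * q u1 - q u0 * p u1 <> 0 ->
  exists c d, forall u, S u -> c * p u + d * q u = 1.
Proof.
  intros Hp Hq H0 H1 H01 HD.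
  set (D := p u0 * q u1 - q u0 * p u1) in HD.
  set (c := (q u1 - q u0) / D). set (d := (p u0 - p u1) / D).
  exists c, d. intros u Hu.
  rewrite (affine_on_const S (fun u => c * p u + d * q u) u0 u1);
    auto using affine_on_lincomb; unfold c, d, D in *; field; auto.
Qed.

(** * Proportionality to a fixed-weight combination *)

Section ProportionalJensen.

Variables (J : R -> Prop) (p q : R -> R) (t : R).
Hypothesis t_range : 0 < t < 1.
Hypothesis t_neq_half : t <> 1 / 2.
Hypothesis J_comb : forall u v, J u -> J v -> J (t * u + (1 - t) * v).
Hypothesis p_pos : forall u, J u -> 0 < p u.
Hypothesis pq_inj : forall u v, J u -> J v -> p u * q v = q u * p v -> u = v.
Hypothesis pq_proportional : forall u v, J u -> J v ->
  q (t * u + (1 - t) * v) * (t * p u + (1 - t) * p v) =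
  p (t * u + (1 - t) * v) * (t * q u + (1 - t) * q v).

Let kappa u v := p (t * u + (1 - t) * v) / (t * p u + (1 - t) * p v).

Lemma comb_p_pos u v : J u -> J v -> 0 < t * p u + (1 - t) * p v.
Proof. intros Hu Hv. pose proof (p_pos u Hu). pose proof (p_pos v Hv). nra. Qed.

Lemma kappa_pos u v : J u -> J v -> 0 < kappa u v.
Proof.
  intros Hu Hv. apply Rdiv_lt_0_compat; [apply p_pos; auto|apply comb_p_pos; auto].
Qed.

Lemma p_comb_scale u v : J u -> J v ->
  p (t * u + (1 - t) * v) = kappa u v * (t * p u + (1 - t) * p v).
Proof. intros Hu Hv. pose proof (comb_p_pos u v Hu Hv). unfold kappa. field. lra. Qed.

Lemma q_comb_scale u v : J u -> J v ->
  q (t * u + (1 - t) * v) = kappa u v * (t * q u + (1 - t) * q v).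
Proof.
  intros Hu Hv. pose proof (comb_p_pos u v Hu Hv). pose proof (pq_proportional u v Hu Hv).
  unfold kappa. apply (Rmult_eq_reg_r (t * p u + (1 - t) * p v)); [|lra].
  field_simplify; lra.
Qed.

Lemma kappa_scale_eq_one k k' :
  0 < k -> (2 * t - 1) * k * k' + (1 - t) * k' - t * k = 0 ->
  (2 * t - 1) * k * k' + (1 - t) * k - t * k' = 0 -> k = 1.
Proof.
  intros Hk E E'. assert (k' = k) as -> by lra.
  assert (Hprod : (2 * t - 1) * k * (k - 1) = 0) by lra.
  apply Rmult_integral in Hprod as [Hprod|Hprod]; [|lra].
  apply Rmult_integral in Hprod as [Hprod|Hprod]; lra.
Qed.

Lemma cross_eq_of_common_multiple pw qw a1 b1 a2 b2 :
  pw <> 0 -> qw * a1 = pw * b1 -> qw * a2 = pw * b2 -> a2 * b1 = a1 * b2.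
Proof.
  intros Hpw E1 E2. apply (Rmult_eq_reg_l pw); auto.
  transitivity (a2 * (pw * b1)); [ring|rewrite <- E1].
  transitivity (a1 * (qw * a2)); [ring|rewrite E2; ring].
Qed.

(* With m = t u + (1-t) v and m' = t v + (1-t) u, compare the proportionality
   relations at t m + (1-t) u = t u + (1-t) m' and at
   t m' + (1-t) v = t v + (1-t) m. *)
Lemma kappa_eq_one u v : J u -> J v -> p u * q v - q u * p v <> 0 -> kappa u v = 1.
Proof.
  intros Hu Hv HD.
  assert (Hm : J (t * u + (1 - t) * v)) by auto.
  assert (Hm' : J (t * v + (1 - t) * u)) by auto.
  assert (Ew : t * u + (1 - t) * (t * v + (1 - t) * u) =
               t * (t * u + (1 - t) * v) + (1 - t) * u) by ring.
  assert (Ew' : t * v + (1 - t) * (t * u + (1 - t) * v) =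
                t * (t * v + (1 - t) * u) + (1 - t) * v) by ring.
  pose proof (pq_proportional _ _ Hm Hu) as P1. pose proof (pq_proportional _ _ Hu Hm') as P2.
  pose proof (pq_proportional _ _ Hm' Hv) as P3. pose proof (pq_proportional _ _ Hv Hm) as P4.
  rewrite Ew in P2. rewrite Ew' in P4.
  pose proof (cross_eq_of_common_multiple _ _ _ _ _ _
    (Rgt_not_eq _ _ (p_pos _ (J_comb _ _ Hm Hu))) P1 P2) as C1.
  pose proof (cross_eq_of_common_multiple _ _ _ _ _ _
    (Rgt_not_eq _ _ (p_pos _ (J_comb _ _ Hm' Hv))) P3 P4) as C2.
  rewrite (p_comb_scale u v), (q_comb_scale u v), (p_comb_scale v u), (q_comb_scale v u)
    in C1, C2 by auto.
  set (k := kappa u v) in *. set (k' := kappa v u) in *.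
  set (c := t * (1 - t) * (p u * q v - q u * p v)).
  assert (Hts : c <> 0).
  { apply Rmult_integral_contrapositive_currified; auto.
    apply Rmult_integral_contrapositive_currified; lra. }
  apply (kappa_scale_eq_one k k'); [apply kappa_pos; auto| |].
  - apply (Rmult_eq_reg_l c); [unfold c; rewrite Rmult_0_r|exact Hts].
    match type of C1 with ?L = ?R => transitivity (R - L); [ring|lra] end.
  - apply (Rmult_eq_reg_l c); [unfold c; rewrite Rmult_0_r|exact Hts].
    match type of C2 with ?L = ?R => transitivity (L - R); [ring|lra] end.
Qed.

Lemma t_affine_of_proportional : t_affine_on J t p /\ t_affine_on J t q.
Proof.
  enough (H : forall u v, J u -> J v ->
    p (t * u + (1 - t) * v) = t * p u + (1 - t) * p v /\
    q (t * u + (1 - t) * v) = t * q u + (1 - t) * q v)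
    by (split; intros u v Hu Hv; apply H; auto).
  intros u v Hu Hv.
  destruct (Req_dec (p u * q v - q u * p v) 0) as [HD|HD].
  - assert (u = v) as <- by (apply pq_inj; auto; lra).
    replace (t * u + (1 - t) * u) with u by ring. split; ring.
  - rewrite p_comb_scale, q_comb_scale, kappa_eq_one by auto. split; ring.
Qed.

End ProportionalJensen.

Lemma affine_of_proportional J p q t :
  convex_set J -> (forall a, J a -> exists c, J c /\ c < a) ->
  0 < t < 1 -> t <> 1 / 2 -> (forall u, J u -> 0 < p u) ->
  strictly_monotone_on J (fun u => q u / p u) ->
  (forall u v, J u -> J v ->
    q (t * u + (1 - t) * v) * (t * p u + (1 - t) * p v) =
    p (t * u + (1 - t) * v) * (t * q u + (1 - t) * q v)) ->
  affine_on J p /\ affine_on J q.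
Proof.
  intros HJ Hlt Ht Ht2 Hp Hpsi Hprop.
  assert (Hinj : forall u v, J u -> J v -> p u * q v = q u * p v -> u = v).
  { intros u v Hu Hv E. apply (strictly_monotone_inj J _ u v Hpsi Hu Hv).
    pose proof (Hp u Hu). pose proof (Hp v Hv). field_simplify_eq; lra. }
  destruct (t_affine_of_proportional J p q t Ht Ht2) as [Htp Htq]; auto.
  { intros u v Hu Hv. apply convex_set_comb; auto; lra. }
  assert (Ap : affine_on J p).
  { apply (affine_on_of_t_affine t); auto.
    intros a b Ha Hb Hab. exists 0. intros x Hx. apply Rlt_le, Hp, (HJ a b); auto. }
  split; auto.
  apply (affine_on_of_t_affine t); auto.
  intros a b Ha Hb Hab.
  set (K := Rmin (Rmin (q a / p a) (q b / p b)) 0).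
  exists (Rmax (p a) (p b) * K). intros x Hx.
  assert (Jx : J x) by (apply (HJ a b); auto).
  assert (Hpx : p x <= Rmax (p a) (p b))
    by (rewrite (Ap a b x) by auto; apply chord_between; auto).
  assert (Hpsix : K <= q x / p x).
  { apply Rle_trans with (Rmin (q a / p a) (q b / p b)); [apply Rmin_l|].
    apply (strictly_monotone_between J _ a b x Hpsi Ha Hb Jx Hx). }
  assert (K <= 0) by apply Rmin_r.
  pose proof (Hp x Jx).
  replace (q x) with (p x * (q x / p x)) by (field; lra).
  nra.
Qed.

Lemma proportional_of_Bmean_eq_Amean_two_weights I f g h t :
  convex_set I -> B0 I f g -> qa_gen I h -> 0 < t < 1 ->
  (forall x, in_In I 2 x ->
     Bmean I f g 2 x (two_weights t) = Amean I h 2 x (two_weights t)) ->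
  forall u v, image I h u -> image I h v ->
  g (inv_on I h (t * u + (1 - t) * v)) *
    (t * f (inv_on I h u) + (1 - t) * f (inv_on I h v)) =
  f (inv_on I h (t * u + (1 - t) * v)) *
    (t * g (inv_on I h u) + (1 - t) * g (inv_on I h v)).
Proof.
  intros HI HB Hh Ht Hmeans u v Hu Hv.
  destruct (inv_on_spec I h u Hu) as [Iu Eu], (inv_on_spec I h v Hv) as [Iv Ev].
  set (X := inv_on I h) in *.
  set (x2 := fun i : nat => match i with O => X u | _ => X v end).
  assert (Hx2 : in_In I 2 x2) by (intros [|i] Hi; simpl; auto).
  assert (EA : Amean I h 2 x2 (two_weights t) = X (t * u + (1 - t) * v)).
  { unfold Amean; simpl sumR. unfold x2, two_weights; simpl. fold X. rewrite Eu, Ev.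
    f_equal. field. lra. }
  destruct (Bmean_spec I f g 2 x2 (two_weights t) HI HB Hx2 (two_weights_Lambda t Ht)) as [_ EB].
  rewrite Hmeans, EA in EB by auto. simpl sumR in EB. unfold x2, two_weights in EB; simpl in EB.
  pose proof HB as [Hf _].
  assert (Hm : I (X (t * u + (1 - t) * v))).
  { rewrite <- EA, <- Hmeans by auto.
    apply (Bmean_spec I f g); auto. apply two_weights_Lambda, Ht. }
  pose proof (Hf _ Iu). pose proof (Hf _ Iv). pose proof (Hf _ Hm).
  assert (0 < t * f (X u) + (1 - t) * f (X v)) by nra.
  replace (g (X (t * u + (1 - t) * v))) with
    (f (X (t * u + (1 - t) * v)) * (g (X (t * u + (1 - t) * v)) / f (X (t * u + (1 - t) * v))))
    by (field; lra).
  rewrite EB. field. lra.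
Qed.

Lemma one_in_span_of_Bmean_eq_Amean_two_weights a b f g h t :
  Rbar_lt a b -> B0 (Ival a b) f g -> qa_gen (Ival a b) h -> 0 < t < 1 -> t <> 1 / 2 ->
  (forall x, in_In (Ival a b) 2 x ->
     Bmean (Ival a b) f g 2 x (two_weights t) = Amean (Ival a b) h 2 x (two_weights t)) ->
  exists c d, forall x, Ival a b x -> c * f x + d * g x = 1.
Proof.
  intros Hab HB Hh Ht Ht2 Hmeans.
  pose proof HB as [Hf [Hphi _]]. pose proof Hh as [Hhc Hhm].
  set (I := Ival a b) in *. set (J := image I h). set (X := inv_on I h).
  assert (XJ : forall u, J u -> I (X u)) by (intros u Hu; now apply inv_on_spec).
  assert (Hpsi : strictly_monotone_on J (fun u => g (X u) / f (X u))).
  { apply (strictly_monotone_comp J I X (fun y => g y / f y)); auto.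
    now apply strictly_monotone_inv_on. }
  assert (HJ : convex_set J) by (apply image_convex; auto; apply Ival_convex).
  assert (Hpos : forall u, J u -> 0 < f (X u)) by (intros u Hu; apply Hf, XJ, Hu).
  destruct (affine_of_proportional J (fun u => f (X u)) (fun u => g (X u)) t HJ
    (image_Ival_ex_lt a b h Hhm) Ht Ht2 Hpos Hpsi) as [Ap Aq].
  { apply proportional_of_Bmean_eq_Amean_two_weights; auto. apply Ival_convex. }
  destruct (Ival_nonempty a b Hab) as [x0 Hx0].
  assert (Hu0 : J (h x0)) by now exists x0.
  destruct (image_Ival_ex_lt a b h Hhm (h x0) Hu0) as [v [Hv Hvu]].
  destruct (one_in_span_of_affine_pair J _ _ v (h x0) Ap Aq Hv Hu0 Hvu) as [c [d Hcd]].
  - pose proof (Hpos v Hv). pose proof (Hpos _ Hu0).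
    intros E. enough (v = h x0) by lra.
    apply (strictly_monotone_inj J _ v (h x0) Hpsi); auto. field_simplify_eq; lra.
  - exists c, d. intros x Hx.
    rewrite <- (Hcd (h x)) by now exists x.
    unfold X. now rewrite (inv_on_eq I h (h x) x).
Qed.

(** * Wronskians *)

Lemma Wr10_eq f g x : Wr f g 1 0 x = Derive f x * g x - f x * Derive g x.
Proof. reflexivity. Qed.

Lemma Wr21_eq f g x :
  Wr f g 2 1 x = Derive (Derive f) x * Derive g x - Derive f x * Derive (Derive g) x.
Proof. reflexivity. Qed.

Lemma B2_Wr10_neq0 I f g x : B2 I f g -> I x -> Wr f g 1 0 x <> 0.
Proof.
  intros [Hf [Cf [Cg Hd]]] Hx E. destruct (Cf x Hx) as [Df _], (Cg x Hx) as [Dg _].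
  apply (Hd x Hx). pose proof (Hf x Hx).
  rewrite Derive_div by (auto; lra). rewrite Wr10_eq in E.
  replace (Derive g x * f x - g x * Derive f x) with (- (Derive f x * g x - f x * Derive g x))
    by ring.
  rewrite E. unfold Rdiv. ring.
Qed.

Lemma Derive_lincomb_locally_const F G c d k y :
  locally y (fun z => c * F z + d * G z = k) -> ex_derive F y -> ex_derive G y ->
  c * Derive F y + d * Derive G y = 0.
Proof.
  intros Hk HF HG.
  assert (H : is_derive (fun _ : R => k) y (c * Derive F y + d * Derive G y)).
  { apply (is_derive_ext_loc (fun z => c * F z + d * G z)); auto.
    auto_derive; auto. now rewrite !Rmult_1_l. }
  apply is_derive_unique in H. rewrite Derive_const in H. auto.
Qed.

Lemma is_derive_0_const I A :
  convex_set I -> (forall y, I y -> is_derive A y 0) -> forall x y, I x -> I y -> A x = A y.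
Proof.
  intros HI HA x y Hx Hy.
  destruct (Rtotal_order x y) as [L|[->|L]]; auto.
  - apply (eq_is_derive A x y); auto. intros z Hz. apply HA, (HI x y); auto.
  - symmetry. apply (eq_is_derive A y x); auto. intros z Hz. apply HA, (HI y x); auto.
Qed.

Lemma Psi_eq0_of_one_in_span a b f g c d :
  B2 (Ival a b) f g -> (forall x, Ival a b x -> c * f x + d * g x = 1) ->
  forall x, Ival a b x -> Psi f g x = 0.
Proof.
  intros HB Hcd x Hx. pose proof HB as [_ [Cf [Cg _]]].
  assert (D1 : forall y, Ival a b y -> c * Derive f y + d * Derive g y = 0).
  { intros y Hy. destruct (Cf y Hy) as [Ef _], (Cg y Hy) as [Eg _].
    apply (Derive_lincomb_locally_const f g c d 1); auto.
    apply (filter_imp (Ival a b)); auto. now apply Ival_locally. }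
  assert (D2 : c * Derive (Derive f) x + d * Derive (Derive g) x = 0).
  { destruct (Cf x Hx) as [_ [Ef _]], (Cg x Hx) as [_ [Eg _]].
    apply (Derive_lincomb_locally_const (Derive f) (Derive g) c d 0); auto.
    apply (filter_imp (Ival a b)); auto. now apply Ival_locally. }
  pose proof (D1 x Hx) as D1x. pose proof (Hcd x Hx).
  assert (EC : c * Wr f g 2 1 x = 0).
  { rewrite Wr21_eq.
    transitivity (Derive g x * (c * Derive (Derive f) x + d * Derive (Derive g) x)
                  - Derive (Derive g) x * (c * Derive f x + d * Derive g x)); [ring|].
    rewrite D1x, D2. ring. }
  assert (ED : d * Wr f g 2 1 x = 0).
  { rewrite Wr21_eq.
    transitivity (Derive (Derive f) x * (c * Derive f x + d * Derive g x)
                  - Derive f x * (c * Derive (Derive f) x + d * Derive (Derive g) x)); [ring|].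
    rewrite D1x, D2. ring. }
  assert (EW : Wr f g 2 1 x = 0).
  { destruct (Req_dec c 0) as [->|Hc].
    - apply Rmult_integral in ED as [->|]; [lra|auto].
    - apply Rmult_integral in EC as [|]; [contradiction|auto]. }
  unfold Psi. rewrite EW. unfold Rdiv. ring.
Qed.

Section WronskianQuotients.

Variables (f g : R -> R) (y : R).
Hypotheses (Df : ex_derive f y) (Dg : ex_derive g y)
  (DDf : ex_derive (Derive f) y) (DDg : ex_derive (Derive g) y)
  (W_neq0 : Wr f g 1 0 y <> 0).

Lemma is_derive_Dg_div_Wr10 :
  is_derive (fun z => - Derive g z / Wr f g 1 0 z) y
    (g y * Wr f g 2 1 y / (Wr f g 1 0 y) ^ 2).
Proof.
  change (is_derive (fun z => - Derive g z / (Derive f z * g z - f z * Derive g z)) y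
    (g y * (Derive (Derive f) y * Derive g y - Derive f y * Derive (Derive g) y)
     / (Derive f y * g y - f y * Derive g y) ^ 2)).
  auto_derive; [repeat split; auto|].
  change (Derive (fun x => Derive g x) y) with (Derive (Derive g) y).
  change (Derive (fun x => Derive f x) y) with (Derive (Derive f) y).
  change (Derive (fun x => g x) y) with (Derive g y).
  change (Derive (fun x => f x) y) with (Derive f y).
  field. exact W_neq0.
Qed.

Lemma is_derive_Df_div_Wr10 :
  is_derive (fun z => Derive f z / Wr f g 1 0 z) y
    (- f y * Wr f g 2 1 y / (Wr f g 1 0 y) ^ 2).
Proof.
  change (is_derive (fun z => Derive f z / (Derive f z * g z - f z * Derive g z)) y
    (- f y * (Derive (Derive f) y * Derive g y - Derive f y * Derive (Derive g) y)
     / (Derive f y * g y - f y * Derive g y) ^ 2)).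
  auto_derive; [repeat split; auto|].
  change (Derive (fun x => Derive g x) y) with (Derive (Derive g) y).
  change (Derive (fun x => Derive f x) y) with (Derive (Derive f) y).
  change (Derive (fun x => g x) y) with (Derive g y).
  change (Derive (fun x => f x) y) with (Derive f y).
  field. exact W_neq0.
Qed.

End WronskianQuotients.

Lemma one_in_span_of_Psi_eq0 a b f g :
  Rbar_lt a b -> B2 (Ival a b) f g -> (forall x, Ival a b x -> Psi f g x = 0) ->
  exists c d, forall x, Ival a b x -> c * f x + d * g x = 1.
Proof.
  intros Hab HB HPsi. pose proof HB as [_ [Cf [Cg _]]].
  assert (HW : forall y, Ival a b y -> Wr f g 2 1 y = 0).
  { intros y Hy. pose proof (HPsi y Hy) as E. pose proof (B2_Wr10_neq0 _ f g y HB Hy).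
    unfold Psi in E. apply Rmult_integral in E as [E|E]; [lra|].
    exfalso. now apply (Rinv_neq_0_compat (Wr f g 1 0 y)). }
  (* c f + d g = 1 holds pointwise for these c, d; Psi = 0 makes them constant. *)
  set (c := fun z => - Derive g z / Wr f g 1 0 z).
  set (d := fun z => Derive f z / Wr f g 1 0 z).
  assert (Hc : forall y, Ival a b y -> is_derive c y 0).
  { intros y Hy. destruct (Cf y Hy) as [Df [DDf _]], (Cg y Hy) as [Dg [DDg _]].
    pose proof (is_derive_Dg_div_Wr10 f g y) as H. rewrite HW in H by auto.
    replace 0 with (g y * 0 / Wr f g 1 0 y ^ 2) by (unfold Rdiv; ring).
    apply H; auto. now apply (B2_Wr10_neq0 (Ival a b)). }
  assert (Hd : forall y, Ival a b y -> is_derive d y 0).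
  { intros y Hy. destruct (Cf y Hy) as [Df [DDf _]], (Cg y Hy) as [Dg [DDg _]].
    pose proof (is_derive_Df_div_Wr10 f g y) as H. rewrite HW in H by auto.
    replace 0 with (- f y * 0 / Wr f g 1 0 y ^ 2) by (unfold Rdiv; ring).
    apply H; auto. now apply (B2_Wr10_neq0 (Ival a b)). }
  destruct (Ival_nonempty a b Hab) as [x0 Hx0].
  exists (c x0), (d x0). intros x Hx.
  rewrite (is_derive_0_const _ c (Ival_convex a b) Hc x0 x),
    (is_derive_0_const _ d (Ival_convex a b) Hd x0 x) by auto.
  pose proof (B2_Wr10_neq0 _ f g x HB Hx) as HW10.
  unfold c, d. rewrite Wr10_eq in *. field. auto.
Qed.

Theorem theorem3p4 (a b : Rbar) (f g : R -> R) :
  Rbar_lt a b -> B0 (Ival a b) f g ->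
  let I := Ival a b in
  let S1 := exists h, qa_gen I h /\
      forall (n : nat) (x l : nat -> R), (1 <= n)%nat -> in_In I n x -> in_Lambda n l ->
        Bmean I f g n x l = Amean I h n x l in
  let S2 := exists h, qa_gen I h /\
      forall (n : nat) (x : nat -> R), (1 <= n)%nat -> in_In I n x ->
        Bmean I f g n x ones = Amean I h n x ones in
  let S3 := exists h (n : nat), qa_gen I h /\ (3 <= n)%nat /\
      forall x : nat -> R, in_In I n x -> Bmean I f g n x ones = Amean I h n x ones in
  let S4 := exists h, qa_gen I h /\
      forall x l : nat -> R, in_In I 2 x -> in_Lambda 2 l ->
        Bmean I f g 2 x l = Amean I h 2 x l in
  let S5 := exists t h, ((0 < t < 1/2) \/ (1/2 < t < 1)) /\ qa_gen I h /\
      forall x : nat -> R, in_In I 2 x ->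
        Bmean I f g 2 x (two_weights t) = Amean I h 2 x (two_weights t) in
  let S6 := exists c d : R, forall x, I x -> c * f x + d * g x = 1 in
  let S7 := forall x, I x -> Psi f g x = 0 in
  (S1 <-> S2) /\ (S2 <-> S3) /\ (S3 <-> S4) /\ (S4 <-> S5) /\ (S5 <-> S6) /\
  (B2 I f g -> (S6 <-> S7)).
Proof.
  intros Hab HB I S1 S2 S3 S4 S5 S6 S7.
  assert (H12 : S1 -> S2).
  { intros [h [Hh H]]. exists h. split; auto. intros n x Hn Hx. apply H; auto using ones_Lambda. }
  assert (H23 : S2 -> S3).
  { intros [h [Hh H]]. exists h, 3%nat. split; [auto|split; [auto|]].
    intros x Hx. apply H; auto; lia. }
  assert (H35 : S3 -> S5).
  { intros [h [n [Hh [Hn H]]]]. exists (/ INR n), h. split; [|split; [auto|]].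
    - left. now apply inv_INR_lt_half.
    - apply Bmean_eq_Amean_two_weights_of_ones; auto. apply HB. lia. }
  assert (H14 : S1 -> S4) by (intros [h [Hh H]]; exists h; split; auto).
  assert (H45 : S4 -> S5).
  { intros [h [Hh H]]. exists (1 / 4), h. split; [left; lra|split; auto].
    intros x Hx. apply H; auto. apply two_weights_Lambda. lra. }
  assert (H56 : S5 -> S6).
  { intros [t [h [Ht [Hh H]]]].
    apply (one_in_span_of_Bmean_eq_Amean_two_weights a b f g h t); auto; lra. }
  assert (H61 : S6 -> S1).
  { intros [c [d Hcd]]. exists (fun y => mobius c d (g y / f y)).
    split; [now apply qa_gen_mobius|].
    intros n x l _ Hx Hl. apply Bmean_eq_Amean_mobius; auto. apply Ival_convex. }
  assert (H67 : B2 I f g -> (S6 <-> S7)).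
  { intros HB2. split.
    - intros [c [d Hcd]]. exact (Psi_eq0_of_one_in_span a b f g c d HB2 Hcd).
    - exact (one_in_span_of_Psi_eq0 a b f g Hab HB2). }
  clearbody S1 S2 S3 S4 S5 S6 S7. tauto.
Qed.
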